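(* Let $1\le r\le n$ and let $p=(p_1,\dots,p_n)$ be a size vector. If $A,B\subseteq S_p$ form a maximal pair of $r$-cross-intersecting families, then each of $A$, $B$ determines the other; in particular $A$ and $B$ have the same set of relevant coordinates. Moreover, if $A$ is the Hamming ball of radius $l$ around $x_0\in S_p$ in a set of coordinates $T\subseteq[n]$, then $|T|\ge l+r$, $B$ is the Hamming ball of radius $|T|-l-r$ around $x_0$ in the coordinates $T$, $p_i\le p_j$ holds for every $i\in T$ and $j\in[n]\setminus T$, and $\big||T|-2l-r\big|\le 1$.
   Context: $[m]=\{1,\dots,m\}$. A size vector is a sequence of integers $p=(p_1,\dots,p_n)$ with $p_i\ge 2$ for all $i$; $S_p=[p_1]\times\cdots\times[p_n]$. Two vectors $x,y\in S_p$ are $r$-intersecting if $|\{i: x_i=y_i\}|\ge r$; families $A,B\subseteq S_p$ are $r$-cross-intersecting if every $x\in A$, $y\in B$ are $r$-intersecting. A pair $(A,B)$ of $r$-cross-intersecting families in $S_p$ is maximal if it maximizes $|A|\cdot|B|$ among all $r$-cross-intersecting pairs in $S_p$. A coordinate $i$ is irrelevant for $A\subseteq S_p$ if whenever two elements of $S_p$ differ only in coordinate $i$ and one lies in $A$, so does the other; otherwise $i$ is relevant for $A$. For $T\subseteq[n]$, $x_0\in S_p$ and $0\le k\le |T|$, the Hamming ball of radius $k$ around $x_0$ in the coordinates $T$ is $\{x\in S_p: |\{i\in T: x_i\ne (x_0)_i\}|\le k\}$. *)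

From mathcomp Require Import all_boot.
Set Implicit Arguments. Unset Strict Implicit. Unset Printing Implicit Defensive.

(* S_p = [p_1] x ... x [p_n], coordinates indexed by 'I_n, the i-th
   coordinate ranges over 'I_(p i) (a set of size p_i standing for [p_i]). *)
Definition Sp (n : nat) (p : 'I_n -> nat) : finType :=
  {dffun forall i : 'I_n, 'I_(p i)}.

Section Defs.
Variables (n : nat) (p : 'I_n -> nat).

Definition size_vector : Prop := forall i : 'I_n, 2 <= p i.

Definition agree (x y : Sp p) : {set 'I_n} := [set i | x i == y i].

Definition r_intersecting (r : nat) (x y : Sp p) : Prop := r <= #|agree x y|.

Definition r_cross_intersecting (r : nat) (A B : {set Sp p}) : Prop :=
  forall x y, x \in A -> y \in B -> r_intersecting r x y.

Definition maximal_pair (r : nat) (A B : {set Sp p}) : Prop :=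
  r_cross_intersecting r A B /\
  forall A' B' : {set Sp p}, r_cross_intersecting r A' B' ->
    #|A'| * #|B'| <= #|A| * #|B|.

Definition irrelevant (A : {set Sp p}) (i : 'I_n) : Prop :=
  forall x y : Sp p, (forall j, j != i -> x j = y j) -> x \in A -> y \in A.

Definition relevant (A : {set Sp p}) (i : 'I_n) : Prop := ~ irrelevant A i.

Definition hamming_ball (T : {set 'I_n}) (x0 : Sp p) (k : nat) : {set Sp p} :=
  [set x : Sp p | #|[set i in T | x i != x0 i]| <= k].

End Defs.

From mathcomp Require Import all_boot zify.
Set Implicit Arguments. Unset Strict Implicit. Unset Printing Implicit Defensive.

(* In a maximal pair, B is the family of all points r-intersecting every point
   of A: enlarging B to that family keeps the pair cross-intersecting.  This
   family inherits each irrelevant coordinate of A, and symmetrically for A.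
   For A the Hamming ball of radius l in T it is the ball of radius |T| - l - r,
   and any two balls around x0 in T whose radii sum to at most |T| - r are
   cross-intersecting.  A ball of radius k in T has size
   prod_(i \notin T) p_i * sum_(a <= k) e_a, where e_a is the a-th elementary
   symmetric function of the p_i - 1, i \in T.  The e_a are log-concave, hence
   moving radius from the larger ball to the smaller one increases |A| |B| unless
   the radii differ by at most 1; and replacing i \in T by j \notin T with
   p_j < p_i enlarges both balls. *)

Section LogConcave.
Implicit Types (s : nat -> nat) (q a b c d e k : nat).

(* The division-free form of "s (x + d) / s x is nonincreasing in x". *)
Definition log_concave s :=
  forall a c d, a <= c -> s a * s (c + d) <= s c * s (a + d).

Definition mulX s a := if a is a'.+1 then s a' else 0.

Lemma log_concave_mulX s : log_concave s -> log_concave (mulX s).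
Proof. by move=> hs [|a] [|c] d //=; rewrite ?addSn /= ltnS => /hs. Qed.

Lemma log_concave_mulX_mixed s a c d : log_concave s -> a <= c ->
  s a * mulX s (c + d) + mulX s a * s (c + d) <=
  s c * mulX s (a + d) + mulX s c * s (a + d).
Proof.
move=> hs; case: a c d => [|a] [|c] [|d] //= hac; rewrite ?addn0 ?add0n /=.
- lia.
- by have := hs 0 c d.+1 hac; rewrite add0n; lia.
- lia.
- have := hs a.+1 c.+1 d hac; have := hs a c d.+2 hac.
  by rewrite !addSn !addnS; lia.
Qed.

(* The coefficients of (1 + q X) f are log-concave if those of f are. *)
Lemma log_concave_mul_linear s q :
  log_concave s -> log_concave (fun a => s a + q * mulX s a).
Proof.
move=> hs a c d hac.
have expand u0 u1 v0 v1 : (u0 + q * u1) * (v0 + q * v1) =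
    u0 * v0 + q * (u0 * v1 + u1 * v0) + q * q * (u1 * v1).
  by rewrite !mulnDl !mulnDr !mulnA; lia.
rewrite !expand; apply: leq_add; first apply: leq_add.
- exact: hs.
- by rewrite leq_mul2l log_concave_mulX_mixed ?orbT.
- by rewrite leq_mul2l log_concave_mulX ?orbT.
Qed.

Lemma log_concave_delta : log_concave (fun a => (a == 0 : nat)).
Proof. by move=> [|a] [|c] [|d]. Qed.

Definition psum s k := \sum_(a < k) s a.

Lemma psumS s k : psum s k.+1 = psum s k + s k.
Proof. by rewrite /psum big_ord_recr. Qed.

Lemma psum_mul_linear s q k :
  psum (fun a => s a + q * mulX s a) k.+1 = psum s k.+1 + q * psum s k.
Proof.
rewrite /psum big_split /= -big_distrr /=; congr (_ + q * _).
by rewrite big_ord_recl /= add0n.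
Qed.

Lemma psum_addn s k e : psum s (k + e) = \sum_(a < k) s (a + e) + psum s e.
Proof.
elim: k => [|k IH]; first by rewrite big_ord0.
by rewrite addSn psumS IH big_ord_recr /= addnAC.
Qed.

Lemma log_concave_sum s c e k : log_concave s -> k <= c ->
  psum s k * s (c + e) <= s c * \sum_(a < k) s (a + e).
Proof.
move=> hs; elim: k => [|k IH] hk; first by rewrite /psum !big_ord0.
rewrite psumS mulnDl big_ord_recr /= mulnDr.
exact: leq_add (IH (ltnW hk)) (hs _ _ _ (ltnW hk)).
Qed.

(* Writing b = a.+1 + e.+1, psum s b is the sum of the first a.+1 terms shifted
   by e.+1 plus psum s e.+1 >= s 0 > 0; log-concavity bounds the shifted terms. *)
Lemma psum_log_concave_lt s a b : log_concave s -> 0 < s 0 -> 0 < s a.+1 ->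
  a.+2 <= b -> psum s a.+1 * psum s b.+1 < psum s a.+2 * psum s b.
Proof.
move=> hs s0 sa hb.
have [e be] : exists e, b = a.+1 + e.+1 by exists (b - a.+2); lia.
have hsum := log_concave_sum e.+1 hs (leqnn a.+1).
have hsplit := psum_addn s a.+1 e.+1.
have hpos : s 0 <= psum s e.+1 by rewrite /psum big_ord_recl leq_addr.
rewrite -be in hsum hsplit; rewrite [psum s a.+2]psumS [psum s b.+1]psumS.
move: hsum hsplit hpos.
set X := psum s a.+1; set Y := psum s b; set Z := \sum_(_ < _) _; set F := psum s e.+1.
nia.
Qed.

End LogConcave.

Lemma finset_ind (T : finType) (P : {set T} -> Prop) :
  P set0 -> (forall (i : T) (U : {set T}), i \notin U -> P U -> P (i |: U)) ->
  forall U, P U.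
Proof.
move=> P0 PS U; elim: {U}#|U| {-2}U (eqxx #|U|) => [|k IH] U.
  by rewrite cards_eq0 => /eqP ->.
case: (set_0Vmem U) => [-> //|[i iU]] hU.
rewrite -(setD1K iU); apply: PS; first by rewrite !inE eqxx.
by apply: IH; rewrite (cardsD1 i U) iU add1n in hU.
Qed.

Section ElementarySymmetric.
Variables (I : finType) (q : I -> nat).
Implicit Types (T S : {set I}) (a : nat).

Definition elem_sym T a := \sum_(S : {set I} | (S \subset T) && (#|S| == a)) \prod_(i in S) q i.

Lemma elem_sym_set0 a : elem_sym set0 a = (a == 0).
Proof.
rewrite /elem_sym; case: a => [|a].
  rewrite (big_pred1 set0) ?big_set0 // => S /=.
  by rewrite subset0; case: eqP => // ->; rewrite cards0.
rewrite big_pred0 // => S; rewrite subset0.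
by case: eqP => // ->; rewrite cards0.
Qed.

Lemma elem_sym_setU1 (i : I) T a : i \notin T ->
  elem_sym (i |: T) a = elem_sym T a + q i * mulX (elem_sym T) a.
Proof.
move=> iT.
have subT S : i \in S -> (S \subset T) = false.
  by move=> iS; apply/negbTE/negP => /subsetP /(_ i iS); rewrite (negbTE iT).
have subU1 S : i \notin S -> (S \subset i |: T) = (S \subset T).
  by move=> iS; rewrite -{2}(setU1K iT) subsetD1 iS andbT.
rewrite /elem_sym [LHS](bigID (fun S => i \in S)) /= addnC; congr (_ + _).
  apply: eq_bigl => S; case iS: (i \in S); first by rewrite andbF subT.
  by rewrite andbT subU1 ?iS.
rewrite (reindex_onto (fun S' => i |: S') (fun S => S :\ i)) /=; last first.
  by move=> S /andP [_ iS]; rewrite setD1K.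
have setU1K_eq S : ((i |: S) :\ i == S) = (i \notin S).
  case iS: (i \in S) => /=; last by rewrite setU1K ?iS // eqxx.
  by apply/negbTE/eqP => /setP /(_ i); rewrite !inE eqxx iS.
under eq_bigl => S do rewrite setU1K_eq setU11 andbT cardsU1.
case: a => [|a] /=.
  by rewrite big_pred0 ?muln0 // => S; case: (i \in S); rewrite ?andbF.
rewrite big_distrr /=; apply: eq_big => S.
  case iS: (i \in S); first by rewrite andbF subT.
  by rewrite andbT add1n eqSS subUset sub1set setU11 /= subU1 ?iS.
by move=> /andP [_ iS]; rewrite big_setU1.
Qed.

Lemma elem_sym_log_concave T : log_concave (elem_sym T).
Proof.
elim/finset_ind: T => [|i T iT IH] a c d hac.
  by rewrite !elem_sym_set0; exact: log_concave_delta.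
by rewrite !elem_sym_setU1 //; exact: log_concave_mul_linear IH a c d hac.
Qed.

Lemma elem_sym0 T : elem_sym T 0 = 1.
Proof.
elim/finset_ind: T => [|i T iT IH]; first by rewrite elem_sym_set0.
by rewrite elem_sym_setU1 //= muln0 addn0.
Qed.

Lemma elem_sym_gt0 T a : (forall i, 0 < q i) -> a <= #|T| -> 0 < elem_sym T a.
Proof.
move=> hq; elim/finset_ind: T a => [|i T iT IH] a.
  by rewrite cards0 leqn0 => /eqP ->; rewrite elem_sym_set0.
rewrite cardsU1 iT add1n elem_sym_setU1 // => ha.
case: (leqP a #|T|) => h; first by rewrite ltn_addr // IH.
have -> : a = #|T|.+1 by apply/eqP; rewrite eqn_leq ha h.
by rewrite /= addn_gt0 muln_gt0 hq (IH #|T|) ?orbT.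
Qed.

End ElementarySymmetric.

Section BallCount.
Variables (n : nat) (p : 'I_n -> nat).
Implicit Types (T S : {set 'I_n}).

Definition prod_out T := \prod_(i | i \notin T) p i.
Definition pred_size i := (p i).-1.

Lemma card_diff_set T S (x0 : Sp p) : S \subset T ->
  #|[set x : Sp p | [set i in T | x i != x0 i] == S]| =
  \prod_(i in S) pred_size i * prod_out T.
Proof.
move=> ST.
pose F i := [pred v : 'I_(p i) |
  if i \in S then v != x0 i else if i \in T then v == x0 i else true].
have -> : #|[set x : Sp p | [set i in T | x i != x0 i] == S]| =
          #|(family F : simpl_pred (Sp p))|.
  apply: eq_card => x; rewrite inE; apply/eqP/familyP => [hx i | hx].
    rewrite inE /=; case iS: (i \in S); first by move: iS; rewrite -hx inE => /andP [].
    by case iT: (i \in T) => //; move: iS; rewrite -hx inE iT /= => /negbFE.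
  apply/setP => i; rewrite inE; have := hx i; rewrite inE /=.
  case iS: (i \in S); first by move=> ->; rewrite (subsetP ST i iS).
  by case: (i \in T) => //= ->.
rewrite card_family foldrE big_map big_enum /= (bigID (mem S)) /=; congr (_ * _).
  by apply: eq_bigr => i iS; rewrite /F /= iS cardC1 card_ord.
rewrite /prod_out (bigID (mem T)) /= [X in X * _]big1 ?mul1n.
  apply: eq_big => [i|i /andP [iS iT]].
    case iT: (i \in T); rewrite ?andbF ?andbT //=.
    by apply/negP => iS; rewrite (subsetP ST i iS) in iT.
  by rewrite /F (negbTE iS) (negbTE iT) -[RHS](card_ord (p i)); apply: eq_card.
by move=> i /andP [iS iT]; rewrite /F (negbTE iS) iT; exact: card1.
Qed.

Lemma card_sphere T (x0 : Sp p) (a : nat) :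
  #|[set x : Sp p | #|[set i in T | x i != x0 i]| == a]| =
  elem_sym pred_size T a * prod_out T.
Proof.
rewrite /elem_sym big_distrl /= -sum1_card.
rewrite (partition_big (fun x : Sp p => [set i in T | x i != x0 i])
                       (fun S => (S \subset T) && (#|S| == a))) /=; last first.
  move=> x; rewrite inE => ->; rewrite andbT.
  by apply/subsetP => i; rewrite inE => /andP [].
apply: eq_bigr => S /andP [ST /eqP cardS]; rewrite -(card_diff_set x0 ST) -sum1_card.
by apply: eq_bigl => x; rewrite !inE; case: (_ =P S) => [->|]; rewrite ?andbF ?cardS ?eqxx.
Qed.

Lemma card_ball T (x0 : Sp p) k :
  #|hamming_ball T x0 k| = psum (elem_sym pred_size T) k.+1 * prod_out T.
Proof.
elim: k => [|k IH].
  by rewrite /psum big_ord1 -(card_sphere T x0); apply: eq_card => x; rewrite !inE leqn0.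
rewrite psumS mulnDl -IH -(card_sphere T x0) -(cardsID (hamming_ball T x0 k)).
by congr (_ + _); apply: eq_card => x; rewrite !inE; lia.
Qed.

End BallCount.

Section Partner.
Variables (n : nat) (p : 'I_n -> nat).
Hypothesis hp : size_vector p.
Implicit Types (A B : {set Sp p}) (r : nat).

Definition other_value i (v : 'I_(p i)) : 'I_(p i) :=
  if val v == 0 then Ordinal (hp i) else Ordinal (ltnW (hp i)).

Lemma other_value_neq i (v : 'I_(p i)) : other_value v != v.
Proof. by case: v => [[|m] hm]. Qed.

Definition set_coord (x : Sp p) i (v : 'I_(p i)) : Sp p :=
  @finfun _ (fun j => 'I_(p j)) (dfwith (fun j => x j) v).

Lemma set_coord_in (x : Sp p) i (v : 'I_(p i)) : set_coord x v i = v.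
Proof. by rewrite /set_coord ffunE dfwith_in. Qed.

Lemma set_coord_out (x : Sp p) i (v : 'I_(p i)) j : i != j -> set_coord x v j = x j.
Proof. by move=> ij; rewrite /set_coord ffunE dfwith_out. Qed.

Definition point0 : Sp p := @finfun _ (fun j => 'I_(p j)) (fun j => Ordinal (ltnW (hp j))).

Lemma agreeC (x y : Sp p) : agree x y = agree y x.
Proof. by apply/setP => i; rewrite !inE eq_sym. Qed.

Lemma card_agree_refl (x : Sp p) : #|agree x x| = n.
Proof. by rewrite -[RHS]card_ord; apply: eq_card => i; rewrite !inE eqxx. Qed.

Definition partner r A := [set y : Sp p | [forall x in A, r <= #|agree x y|]].

Lemma partner_cross r A : r_cross_intersecting r A (partner r A).
Proof. by move=> x y xA; rewrite inE => /forall_inP /(_ x xA). Qed.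

Lemma cross_subset_partner r A B :
  r_cross_intersecting r A B -> B \subset partner r A.
Proof.
by move=> hAB; apply/subsetP => y yB; rewrite inE; apply/forall_inP => x xA; exact: hAB.
Qed.

Lemma r_cross_intersectingC r A B :
  r_cross_intersecting r A B -> r_cross_intersecting r B A.
Proof. by move=> hAB x y xB yA; rewrite /r_intersecting agreeC; exact: hAB. Qed.

Lemma maximal_pairC r A B : maximal_pair r A B -> maximal_pair r B A.
Proof.
case=> hAB hmax; split; first exact: r_cross_intersectingC.
by move=> A' B' /r_cross_intersectingC /hmax; rewrite mulnC [#|B| * _]mulnC.
Qed.

Lemma maximal_pair_card_gt0 r A B : r <= n -> maximal_pair r A B -> 0 < #|A| * #|B|.
Proof.
move=> hrn [_ hmax]; apply: leq_trans (hmax [set point0] [set point0] _); first by rewrite cards1.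
by move=> x y; rewrite !inE => /eqP -> /eqP ->; rewrite /r_intersecting card_agree_refl.
Qed.

Lemma maximal_pair_partner r A B : r <= n -> maximal_pair r A B -> B = partner r A.
Proof.
move=> hrn hAB; have := maximal_pair_card_gt0 hrn hAB; rewrite muln_gt0 => /andP [A0 _].
case: hAB => hAB /(_ _ _ (@partner_cross r A)); rewrite leq_mul2l eqn0Ngt A0 /= => hcard.
by apply/eqP; rewrite eqEcard cross_subset_partner.
Qed.

(* Moving the i-th coordinate of z \in A away from x_i keeps it in A, and the
   new point agrees with y wherever it agrees with x. *)
Lemma irrelevant_partner r A i : irrelevant A i -> irrelevant (partner r A) i.
Proof.
move=> hA x y hxy; rewrite !inE => /forall_inP hx; apply/forall_inP => z zA.
pose z' := set_coord z (other_value (x i)).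
have z'A : z' \in A by apply: hA zA => j ji; rewrite /z' set_coord_out // eq_sym.
apply: leq_trans (hx _ z'A) (subset_leq_card _); apply/subsetP => j; rewrite !inE.
case: (eqVneq j i) => [->|ji]; first by rewrite /z' set_coord_in (negbTE (other_value_neq _)).
by rewrite /z' set_coord_out ?(hxy j ji) // eq_sym.
Qed.

End Partner.

Lemma exists_subset_card (T : finType) (U : {set T}) k : k <= #|U| ->
  exists2 L : {set T}, L \subset U & #|L| = k.
Proof.
elim: k => [|k IH] hk; first by exists set0; rewrite ?sub0set ?cards0.
have [L LU cardL] := IH (ltnW hk).
have /subsetPn [u uU uL] : ~~ (U \subset L).
  by apply/negP => /subset_leq_card; rewrite cardL; lia.
by exists (u |: L); rewrite ?subUset ?sub1set ?uU ?LU // cardsU1 uL cardL.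
Qed.

Section Balls.
Variables (n : nat) (p : 'I_n -> nat).
Implicit Types (T : {set 'I_n}) (r : nat).

Lemma hamming_balls_cross T (x0 : Sp p) a b r : a + b + r <= #|T| ->
  r_cross_intersecting r (hamming_ball T x0 a) (hamming_ball T x0 b).
Proof.
move=> hT x y; rewrite !inE => hx hy.
set Dx := [set i in T | x i != x0 i] in hx *.
set Dy := [set i in T | y i != x0 i] in hy *.
have sub : T :\: (Dx :|: Dy) \subset agree x y.
  apply/subsetP => i; rewrite !inE negb_or => /andP [/andP [hxi hyi] iT].
  by rewrite iT /= !negbK in hxi hyi; rewrite (eqP hxi) (eqP hyi).
apply: leq_trans (subset_leq_card sub); rewrite cardsD.
have := subset_leq_card (subsetIr T (Dx :|: Dy)); have := cardsU Dx Dy.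
rewrite /r_intersecting; lia.
Qed.

Hypothesis hp : size_vector p.

(* For "->", the witness x agrees with x0 on T except on a set L of
   min(l, |T :\: Dy|) coordinates outside Dy, and disagrees with y elsewhere,
   so x and y agree only on (T :\: Dy) :\: L. *)
Lemma mem_partner_ball T (x0 : Sp p) l r (y : Sp p) : 1 <= r ->
  (y \in partner r (hamming_ball T x0 l)) =
  (#|[set i in T | y i != x0 i]| + l + r <= #|T|).
Proof.
move=> hr; set Dy := [set i in T | y i != x0 i].
have DyT : Dy \subset T by apply/subsetP => i; rewrite inE => /andP [].
have cardU : #|T :\: Dy| = #|T| - #|Dy| by rewrite cardsD (setIidPr DyT).
apply/idP/idP => hy; last first.
  have hsum : l + #|Dy| + r <= #|T| by lia.
  rewrite inE; apply/forall_inP => x hx.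
  by apply: (hamming_balls_cross hsum hx); rewrite inE.
have [L LU cardL] := exists_subset_card (geq_minr l #|T :\: Dy|).
pose x : Sp p := @finfun _ (fun j => 'I_(p j))
  (fun j => if (j \in T) && (j \notin L) then x0 j else other_value hp (y j)).
have xA : x \in hamming_ball T x0 l.
  rewrite inE; apply: leq_trans (_ : #|L| <= l); last by rewrite cardL geq_minl.
  apply: subset_leq_card; apply/subsetP => j; rewrite inE ffunE.
  by case/andP => jT; rewrite jT /=; case: (j \in L); rewrite //= eqxx.
have sub : agree x y \subset (T :\: Dy) :\: L.
  apply/subsetP => j; rewrite !inE ffunE.
  case: ifP => [/andP [jT jL] | _]; last by rewrite (negbTE (other_value_neq _ _)).
  by rewrite jT jL /= andbT negbK eq_sym.
move: hy; rewrite inE => /forall_inP /(_ x xA) /leq_trans /(_ (subset_leq_card sub)).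
rewrite cardsD (setIidPr LU) cardL cardU; lia.
Qed.

Lemma prod_out_gt0 T : 0 < prod_out p T.
Proof. by apply: prodn_cond_gt0 => i _; exact: ltnW (hp i). Qed.

Lemma pred_size_gt0 i : 0 < pred_size p i.
Proof. by rewrite /pred_size; have := hp i; lia. Qed.

Lemma prod_out_setU1 i T : i \notin T -> prod_out p T = p i * prod_out p (i |: T).
Proof.
move=> iT; rewrite /prod_out (bigD1 i) //=; congr (_ * _).
by apply: eq_bigl => j; rewrite !inE negb_or andbC.
Qed.

Lemma card_ball_setU1 i T (x0 : Sp p) k : i \notin T ->
  p i * #|hamming_ball (i |: T) x0 k| =
  (elem_sym (pred_size p) T k + p i * psum (elem_sym (pred_size p) T) k) * prod_out p T.
Proof.
move=> iT; rewrite card_ball (prod_out_setU1 iT) mulnCA; congr (_ * _).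
have -> : psum (elem_sym (pred_size p) (i |: T)) k.+1 =
    psum (fun a => elem_sym (pred_size p) T a +
                   pred_size p i * mulX (elem_sym (pred_size p) T) a) k.+1.
  by apply: eq_bigr => a _; rewrite elem_sym_setU1.
rewrite psum_mul_linear psumS /pred_size.
by have := hp i; case: (p i) => [|[|m]] //= _; lia.
Qed.

(* By card_ball_setU1, p_i |ball T| = (e + p_i E) P and p_j |ball T'| = (e + p_j E) P
   with T' = j |: T0, so multiplying by p_i p_j leaves p_j e P < p_i e P. *)
Lemma card_ball_exchange_lt T (x0 : Sp p) i j k :
  i \in T -> j \notin T -> p j < p i -> k < #|T| ->
  #|hamming_ball T x0 k| < #|hamming_ball (j |: (T :\ i)) x0 k|.
Proof.
move=> iT jT hji hk; set T0 := T :\ i.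
have iT0 : i \notin T0 by rewrite !inE eqxx.
have jT0 : j \notin T0 by rewrite !inE negb_and jT orbT.
have eT : T = i |: T0 by rewrite setD1K.
have he : 0 < elem_sym (pred_size p) T0 k.
  by apply: elem_sym_gt0 pred_size_gt0 _; move: hk; rewrite eT cardsU1 iT0 add1n.
have hi := card_ball_setU1 x0 k iT0; have hj := card_ball_setU1 x0 k jT0.
rewrite -eT in hi; move: hi hj.
set e := elem_sym _ T0 k; set E := psum _ k; set P := prod_out p T0 => hi hj.
have hP : 0 < P := prod_out_gt0 T0.
have lt_e : p j * (e * P) < p i * (e * P) by rewrite ltn_pmul2r ?muln_gt0 ?he.
rewrite -(ltn_pmul2l (_ : 0 < p i * p j)) ?muln_gt0; last by have := hp i; have := hp j; lia.
rewrite mulnAC [_ * p j]mulnC hi -mulnA hj; lia.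
Qed.

Lemma card_balls_shift_lt T (x0 : Sp p) a b : a.+2 <= b -> a < #|T| ->
  #|hamming_ball T x0 a| * #|hamming_ball T x0 b| <
  #|hamming_ball T x0 a.+1| * #|hamming_ball T x0 b.-1|.
Proof.
move=> hab haT; rewrite !card_ball prednK; last by lia.
rewrite mulnACA [X in _ < X]mulnACA ltn_pmul2r ?muln_gt0 ?prod_out_gt0 //.
apply: psum_log_concave_lt hab; first exact: elem_sym_log_concave.
  by rewrite elem_sym0.
exact: elem_sym_gt0 pred_size_gt0 haT.
Qed.

End Balls.

Section MaximalPairs.
Variables (n : nat) (p : 'I_n -> nat) (r : nat).
Hypotheses (hp : size_vector p) (hr1 : 1 <= r).
Implicit Types (T : {set 'I_n}) (B : {set Sp p}).

Lemma maximal_pair_ball T (x0 : Sp p) l B : r <= n ->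
  maximal_pair r (hamming_ball T x0 l) B ->
  l + r <= #|T| /\ B = hamming_ball T x0 (#|T| - l - r).
Proof.
move=> hrn hAB; have eB := maximal_pair_partner hp hrn hAB.
have hlr : l + r <= #|T|.
  have := maximal_pair_card_gt0 hp hrn hAB; rewrite muln_gt0 => /andP [_].
  case/card_gt0P => y; rewrite eB (mem_partner_ball hp _ _ _ _ hr1); lia.
by split=> //; apply/setP => y; rewrite eB (mem_partner_ball hp _ _ _ _ hr1) inE; lia.
Qed.

Lemma maximal_balls_card_le T T' (x0 : Sp p) l m l' m' :
  maximal_pair r (hamming_ball T x0 l) (hamming_ball T x0 m) ->
  l' + m' + r <= #|T'| ->
  #|hamming_ball T' x0 l'| * #|hamming_ball T' x0 m'| <=
  #|hamming_ball T x0 l| * #|hamming_ball T x0 m|.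
Proof. by case=> _ hmax hT'; apply: hmax; exact: hamming_balls_cross. Qed.

Lemma maximal_balls_size_le T (x0 : Sp p) l m i j :
  maximal_pair r (hamming_ball T x0 l) (hamming_ball T x0 m) ->
  l + m + r = #|T| -> i \in T -> j \notin T -> p i <= p j.
Proof.
move=> hAB hT iT jT; rewrite leqNgt; apply/negP => hji.
have cardT' : #|j |: (T :\ i)| = #|T|.
  by rewrite cardsU1 !inE negb_and jT orbT /= (cardsD1 i T) iT.
have := maximal_balls_card_le (T' := j |: (T :\ i)) (l' := l) (m' := m) hAB.
rewrite cardT' hT leqnn => /(_ isT); rewrite leqNgt ltn_mul //.
  by apply: (card_ball_exchange_lt hp x0 iT jT hji); lia.
by apply: (card_ball_exchange_lt hp x0 iT jT hji); lia.
Qed.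

Lemma maximal_balls_radius_le T (x0 : Sp p) l m :
  maximal_pair r (hamming_ball T x0 l) (hamming_ball T x0 m) ->
  l + m + r = #|T| -> l <= m.+1.
Proof.
move=> hAB hT; rewrite leqNgt; apply/negP => hml.
have hsum : l.-1 + m.+1 + r <= #|T| by lia.
have := maximal_balls_card_le hAB hsum.
by rewrite mulnC [X in _ <= X]mulnC leqNgt (card_balls_shift_lt hp) //; lia.
Qed.

End MaximalPairs.

Theorem theorem4 (n : nat) (p : 'I_n -> nat) (r : nat)
  (hp : size_vector p) (hr1 : 1 <= r) (hrn : r <= n)
  (A B : {set Sp p}) (hAB : maximal_pair r A B) :
  (forall B' : {set Sp p}, maximal_pair r A B' -> B' = B) /\
  (forall A' : {set Sp p}, maximal_pair r A' B -> A' = A) /\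
  (forall i : 'I_n, relevant A i <-> relevant B i) /\
  (forall (T : {set 'I_n}) (x0 : Sp p) (l : nat),
     l <= #|T| -> A = hamming_ball T x0 l ->
     [/\ l + r <= #|T|,
         B = hamming_ball T x0 (#|T| - l - r),
         (forall i j : 'I_n, i \in T -> j \notin T -> p i <= p j),
         #|T| <= (2 * l + r).+1
       & 2 * l + r <= #|T|.+1]).
Proof.
have eB := maximal_pair_partner hp hrn hAB.
have eA := maximal_pair_partner hp hrn (maximal_pairC hAB).
split; first by move=> B' /(maximal_pair_partner hp hrn) ->.
split; first by move=> A' /maximal_pairC /(maximal_pair_partner hp hrn) ->.
split.
  move=> i; split=> hrel hirr; apply: hrel.
    by rewrite eA; exact: irrelevant_partner.
  by rewrite eB; exact: irrelevant_partner.
move=> T x0 l _ eAball; rewrite eAball in hAB.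
have [hlr eBball] := maximal_pair_ball hp hr1 hrn hAB.
rewrite eBball in hAB.
have hT : l + (#|T| - l - r) + r = #|T| by lia.
have hT' : (#|T| - l - r) + l + r = #|T| by lia.
have := maximal_balls_radius_le hp hr1 hAB hT.
have := maximal_balls_radius_le hp hr1 (maximal_pairC hAB) hT'.
split=> //; [move=> i j; exact: (maximal_balls_size_le hp hr1 hAB hT) | lia | lia].
Qed.
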